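(* Let $K$ be a field, $A=\{\alpha_1,\dots,\alpha_m\}\subset K$, $B=\{\beta_1,\dots,\beta_n\}\subset K$ finite sets with $|A|=m$, $|B|=n$, $f=\prod_{i}(x-\alpha_i)$, $g=\prod_j(x-\beta_j)$, and let $x$ be an indeterminate. Let $0\le k\le\min\{m-1,n-1\}$. Let $M_F$ be the $(m+1)\times(m+1)$ matrix whose columns are indexed by $c\in(\alpha_1,\dots,\alpha_m,x)$ (in this order), and whose column indexed by $c$ is $$\big(g(c)c^{m-k-1},\,g(c)c^{m-k-2},\dots,g(c),\,c^{k},\,c^{k-1},\dots,c,\,1\big)^T;$$ similarly let $M_G$ be the $(n+1)\times(n+1)$ matrix with columns indexed by $c\in(\beta_1,\dots,\beta_n,x)$, the column indexed by $c$ being $\big(f(c)c^{n-k-1},\dots,f(c),\,c^{k},\dots,1\big)^T$. Then $$F_k(f,g)=(-1)^{m-k}\frac{\det M_F}{\det V(\alpha_1,\dots,\alpha_m,x)},\qquad G_k(f,g)=(-1)^{(m-k-1)(n-k)}\frac{\det M_G}{\det V(\beta_1,\dots,\beta_n,x)}.$$ In particular $F_k(f,g)$ and $G_k(f,g)$ are symmetric polynomials in $A\cup\{x\}$ and $B\cup\{x\}$ respectively.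
   Context: For $c=(c_1,\dots,c_\ell)$, $V(c)$ is the $\ell\times\ell$ Vandermonde matrix whose $i$-th column is $(c_i^{\ell-1},\dots,c_i,1)^T$, so $\det V(c)=\prod_{1\le i<j\le \ell}(c_i-c_j)$. Write $f=\sum_{i=0}^m f_ix^i$, $g=\sum_{i=0}^ng_ix^i$ with $f_i=g_i=0$ outside the natural ranges. For $0\le k\le\min\{m-1,n-1\}$ consider the $(m+n-2k)\times(m+n-2k)$ matrices with rows indexed by $(f,j)$, $j=n-k-1,\dots,0$, followed by $(g,j)$, $j=m-k-1,\dots,0$, whose first $m+n-2k-1$ entries in row $(f,j)$ (resp. $(g,j)$) are the coefficients of $x^{m+n-k-1},\dots,x^{k+1}$ in $x^jf$ (resp. $x^jg$). $F_k(f,g)(x)$ is the determinant of such a matrix with last entry $x^j$ in rows $(f,j)$ and $0$ in rows $(g,j)$; $G_k(f,g)(x)$ is the determinant with last entry $0$ in rows $(f,j)$ and $x^j$ in rows $(g,j)$. *)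

From HB Require Import structures.
From mathcomp Require Import all_boot all_order all_algebra.
From mathcomp Require Import fraction.
Set Implicit Arguments. Unset Strict Implicit. Unset Printing Implicit Defensive.
Import GRing.Theory.
Local Open Scope ring_scope.

Definition vdm (R : nzRingType) (l : nat) (c : 'I_l -> R) : 'M[R]_l :=
  \matrix_(r < l, i < l) c i ^+ (l.-1 - r).

(* Rows i < n-k are (f, j) with j = n-k-1-i; rows i >= n-k are (g, j) with
   j = m+n-2k-1-i (so j runs m-k-1, ..., 0). *)
Definition subres_mx (K : fieldType) (m n k : nat) (f g : {poly K})
    (lastf lastg : nat -> {poly K}) : 'M[{poly K}]_(m + n - 2 * k) :=
  \matrix_(i < m + n - 2 * k, c < m + n - 2 * k)
    if (i < n - k)%N then
      (if (c < (m + n - 2 * k).-1)%N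
       then ((f * 'X^(n - k - 1 - i))`_(m + n - k - 1 - c))%:P
       else lastf (n - k - 1 - i)%N)
    else
      (if (c < (m + n - 2 * k).-1)%N
       then ((g * 'X^(m + n - 2 * k - 1 - i))`_(m + n - k - 1 - c))%:P
       else lastg (m + n - 2 * k - 1 - i)%N).

Definition Fk (K : fieldType) (m n k : nat) (f g : {poly K}) : {poly K} :=
  \det (subres_mx m n k f g (fun j => 'X^j) (fun _ => 0)).

Definition Gk (K : fieldType) (m n k : nat) (f g : {poly K}) : {poly K} :=
  \det (subres_mx m n k f g (fun _ => 0) (fun j => 'X^j)).

Definition pts_x (K : fieldType) (l : nat) (c : 'I_l -> K) (j : 'I_l.+1)
  : {poly K} :=
  if (j < l)%N =P true is ReflectT h then (c (Ordinal h))%:P else 'X.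

Definition Mmat (K : fieldType) (l k : nat) (h : {poly K}) (c : 'I_l -> K)
  : 'M[{poly K}]_l.+1 :=
  \matrix_(r < l.+1, j < l.+1)
    let p := pts_x c j in
    if (r < l - k)%N then (h \Po p) * p ^+ (l - k - 1 - r) else p ^+ (l - r).

Notation "x %:F" := (@FracField.tofrac _ x).

From HB Require Import structures.
From mathcomp Require Import all_boot all_order all_algebra.
From mathcomp Require Import fingroup perm fraction.
From mathcomp Require Import zify ring.
Set Implicit Arguments. Unset Strict Implicit. Unset Printing Implicit Defensive.
Import GRing.Theory.
Local Open Scope ring_scope.

(* Border the matrix of F_k with k+1 unit rows for the monomials x^k, ..., 1:
   the resulting square matrix S of size n-k+m+1 has determinant F_k.  Let E
   be the matrix whose first n-k columns read off the coefficients of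
   x^(m+n-k-1), ..., x^m of a row of S, and whose column indexed by a point
   p in (alpha_1, ..., alpha_m, x) evaluates the row polynomial at p and adds
   -f(p) times its last entry.  A row (f, j) of S is then sent to
   p^j f(p) - x^j f(p), which vanishes since p is a root of f or p = x.
   Hence S E is block lower triangular, with a unitriangular block (f is monic
   of degree m) and the block M_F, while det E = (-1)^(m-k) det V.  Finally
   G_k(f, g) is F_k(g, f) up to a cyclic permutation of the rows. *)

Definition slotted_desc (R : Type) (p top : nat) (a : nat -> R) (u : R)
    (c : nat) : R :=
  if (c < p)%N then a (top - c)%N else if c == p then u else a (top.+1 - c)%N.

Lemma slotted_desc_bump (R : Type) p top (a : nat -> R) u i :
  slotted_desc p top a u (bump p i) = a (top - i)%N.
Proof.
rewrite /slotted_desc /bump; case: (ltnP i p) => hi; first by rewrite add0n hi.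
rewrite add1n subSS; have -> : (i.+1 < p)%N = false by lia.
by have -> : (i.+1 == p) = false by lia.
Qed.

Lemma sum_slotted_desc (R : comPzRingType) (L p : nat) (a b : nat -> R)
    (u v : R) : (p < L)%N ->
  \sum_(c < L) slotted_desc p L.-2 a u c * slotted_desc p L.-2 b v c =
  u * v + \sum_(d < L.-1) a d * b d.
Proof.
move=> lt_pL; rewrite (bigD1_ord (Ordinal lt_pL)) //=.
rewrite {1 2}/slotted_desc ltnn eqxx; congr (_ + _).
under eq_bigr do rewrite !slotted_desc_bump.
rewrite (reindex_inj rev_ord_inj) /=; apply: eq_bigr => i _.
have lt_iL := ltn_ord i.
by have -> : (L.-2 - (L.-1 - i.+1) = i)%N by lia.
Qed.

Lemma det_castmx (R : comPzRingType) n1 n2 (e : n1 = n2) (A : 'M[R]_n1) :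
  \det (castmx (e, e) A) = \det A.
Proof. by case: n2 / e; rewrite castmx_id. Qed.

Lemma comp_polyE_widen (R : comNzRingType) (p q : {poly R}) M :
  (size p <= M)%N -> p \Po q = \sum_(d < M) (p`_d)%:P * q ^+ d.
Proof.
move=> le_pM; rewrite comp_polyE (big_ord_widen M (fun i => p`_i *: q ^+ i) le_pM).
rewrite big_mkcond /=; apply: eq_bigr => i _.
case: ifP => lt_ip; first by rewrite mul_polyC.
by rewrite nth_default ?mul0r // leqNgt lt_ip.
Qed.

Definition rot_rows (R : Type) (p a : nat) (A : 'M[R]_p.+1) : 'M[R]_p.+1 :=
  \matrix_(i, j) A (inord ((i + a) %% p.+1)) j.

Lemma det_rot_rows1 (R : comPzRingType) p (A : 'M[R]_p.+1) :
  \det (rot_rows 1 A) = (-1) ^+ p * \det A.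
Proof.
rewrite (expand_det_row _ ord_max) (expand_det_row A 0) mulr_sumr.
apply: eq_bigr => j _.
have -> : rot_rows 1 A ord_max j = A 0 j.
  by rewrite mxE /= addn1 modnn; congr (A _ _); apply: val_inj; rewrite /= inordK.
rewrite [RHS]mulrCA; congr (_ * _).
rewrite /cofactor exprD -!mulrA add0n; congr (_ * (_ * \det _)).
apply/matrixP => r c; rewrite !mxE; congr (A _ _); apply: val_inj.
have lt_rp := ltn_ord r.
rewrite /= /bump leqNgt lt_rp add0n inordK ?ltn_pmod // modn_small ?addn1 //.
Qed.

Lemma det_rot_rows (R : comPzRingType) p a (A : 'M[R]_p.+1) :
  \det (rot_rows a A) = (-1) ^+ (a * p) * \det A.
Proof.
elim: a => [|a IHa].
  rewrite mul0n expr0 mul1r; congr (\det _); apply/matrixP => i j; rewrite mxE.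
  by congr (A _ _); apply: val_inj; rewrite /= addn0 modn_small // inordK.
have -> : rot_rows a.+1 A = rot_rows 1 (rot_rows a A).
  apply/matrixP => i j; rewrite !mxE; congr (A _ _); apply: val_inj.
  by rewrite /= !inordK ?ltn_pmod // modnDml addn1 addSnnS.
by rewrite det_rot_rows1 IHa mulrA -exprD mulSn addnC.
Qed.

Lemma sign_pred_mul (R : pzRingType) e : (-1) ^+ (e.-1 * e) = 1 :> R.
Proof. by rewrite -signr_odd oddM; case: e => //= e; rewrite andbN. Qed.

Lemma det_vdm_neq0 (R : idomainType) l (c : 'I_l -> R) :
  injective c -> \det (vdm c) != 0.
Proof.
move=> inj_c.
have -> : vdm c = row_perm (perm (@rev_ord_inj l)) (Vandermonde l (\row_i c i)).
  by apply/matrixP => i j; rewrite !mxE permE /=; congr (_ ^+ _); lia.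
rewrite row_permE det_mulmx det_perm det_Vandermonde mulf_neq0 ?signr_eq0 //.
apply/prodf_neq0 => i _; apply/prodf_neq0 => j lt_ij; rewrite !mxE subr_eq0.
by apply/eqP => /inj_c eq_ji; move: lt_ij; rewrite eq_ji ltnn.
Qed.

Lemma pts_x_inj (K : fieldType) m (alpha : 'I_m -> K) :
  injective alpha -> injective (pts_x alpha).
Proof.
move=> inj_a i j; rewrite /pts_x; case: eqP => hi; case: eqP => hj.
- by move/polyC_inj/inj_a => [eq_ij]; apply: val_inj.
- by move=> eqX; have := size_polyC_leq1 (alpha (Ordinal hi)); rewrite eqX size_polyX.
- by move=> eqX; have := size_polyC_leq1 (alpha (Ordinal hj)); rewrite -eqX size_polyX.
- by move=> _; apply: ord_inj; have := ltn_ord i; have := ltn_ord j; lia.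
Qed.

Lemma comp_pts_x_root (K : fieldType) m (alpha : 'I_m -> K) (f : {poly K}) j :
  (forall i, root f (alpha i)) -> f \Po pts_x alpha j = 0 \/ pts_x alpha j = 'X.
Proof.
move=> root_f; rewrite /pts_x; case: eqP => hj; last by right.
by left; rewrite comp_polyCr (rootP (root_f _)).
Qed.

Section BorderedSubresultant.

Variables (K : fieldType) (m n k : nat) (alpha : 'I_m -> K) (f : {poly K}).
Hypotheses (lt_km : (k < m)%N) (lt_kn : (k < n)%N).
Hypotheses (monic_f : f \is monic) (size_f : size f = m.+1).
Hypothesis root_f : forall i, root f (alpha i).

Local Notation N := (m + n - 2 * k)%N.
Local Notation L := (n - k + m.+1)%N.
Local Notation top := (m + n - k - 1)%N.
Local Notation V := (vdm (pts_x alpha)).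

Lemma coef_f_deg : f`_m = 1.
Proof. by move/monicP: monic_f; rewrite lead_coefE size_f. Qed.

Definition eval_pt (s : nat) : {poly K} :=
  pts_x alpha (inord (s - (n - k)) : 'I_m.+1).

Definition eval_coef (s d : nat) : {poly K} :=
  if (s < n - k)%N then (d == (top - s)%N)%:R else eval_pt s ^+ d.

Definition eval_last (s : nat) : {poly K} :=
  if (s < n - k)%N then 0 else - (f \Po eval_pt s).

Definition eval_mx : 'M[{poly K}]_L :=
  \matrix_(c < L, s < L) slotted_desc N.-1 top (eval_coef s) (eval_last s) c.

Lemma eval_pt_shift (j : 'I_m.+1) : eval_pt (n - k + j) = pts_x alpha j.
Proof. by rewrite /eval_pt addKn inord_val. Qed.

Lemma lt_pivot : (m - k - 1 < m.+1)%N. Proof. lia. Qed.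
Local Notation pivot := (Ordinal lt_pivot).

Lemma drsub_eval_lift (r : 'I_m) (t : 'I_m.+1) :
  drsubmx eval_mx (lift pivot r) t = V (lift 0 r) t.
Proof.
rewrite !mxE /= /slotted_desc /eval_coef /bump /=.
rewrite (_ : (n - k + t < n - k)%N = false) ?eval_pt_shift; last by lia.
have lt_rm := ltn_ord r; case: (ltnP r (m - k - 1)) => le_r.
  by rewrite add0n ifT; [congr (_ ^+ _) | ]; lia.
by rewrite -[(true + r)%N]/(r.+1) !ifF; [congr (_ ^+ _); lia | lia..].
Qed.

Lemma drsub_eval_pivot (t : 'I_m.+1) :
  drsubmx eval_mx pivot t = - (f \Po pts_x alpha t).
Proof.
rewrite !mxE /= /slotted_desc /eval_last /=.
rewrite (_ : (n - k + t < n - k)%N = false) ?eval_pt_shift; last by lia.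
by rewrite ifF ?ifT //; lia.
Qed.

Lemma cofactor_drsub_eval (t : 'I_m.+1) :
  cofactor (drsubmx eval_mx) pivot t = (-1) ^+ (m - k - 1) * cofactor V 0 t.
Proof.
rewrite /cofactor /= add0n exprD -mulrA; congr (_ * (_ * \det _)).
by apply/matrixP => r c; rewrite [LHS]mxE [LHS]mxE [RHS]mxE [RHS]mxE drsub_eval_lift.
Qed.

Lemma comp_f_vdm (t : 'I_m.+1) :
  f \Po pts_x alpha t = \sum_(r < m.+1) (f`_(m - r))%:P * V r t.
Proof.
rewrite (comp_polyE_widen _ (eq_leq size_f)) (reindex_inj rev_ord_inj) /=.
by apply: eq_bigr => r _; rewrite mxE /=; congr (_ * _ ^+ _); lia.
Qed.

(* Expand along the pivot row: f(p) is a combination of the rows of V with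
   coefficient f_m = 1 on the first one, and row r of V is orthogonal to the
   cofactors of row 0 unless r = 0. *)
Lemma det_drsub_eval : \det (drsubmx eval_mx) = (-1) ^+ (m - k) * \det V.
Proof.
rewrite (expand_det_row _ pivot).
under eq_bigr do rewrite drsub_eval_pivot cofactor_drsub_eval comp_f_vdm.
have adj_row r : \sum_(t < m.+1) V r t * cofactor V 0 t = \det V *+ (r == 0).
  have := mul_mx_adj V; move/matrixP/(_ r 0); rewrite !mxE => <-.
  by apply: eq_bigr => t _; rewrite /adjugate (mxE adjugate_key).
transitivity (- (-1) ^+ (m - k - 1) *
    \sum_(r < m.+1) (f`_(m - r))%:P * (\det V *+ (r == 0))).
  under eq_bigr => t _ do rewrite mulNr mulr_suml -sumrN.
  rewrite exchange_big mulr_sumr /=; apply: eq_bigr => r _.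
  rewrite -adj_row !mulr_sumr; apply: eq_bigr => t _; ring.
rewrite (bigD1 0) //= big1 ?addr0 => [|r /negPf ->]; last by rewrite mulr0n mulr0.
rewrite subn0 coef_f_deg mul1r mulr1n [in RHS](_ : m - k = (m - k - 1).+1)%N.
  by rewrite exprS mulN1r.
lia.
Qed.

Lemma det_eval_mx : \det eval_mx = (-1) ^+ (m - k) * \det V.
Proof.
rewrite -[eval_mx]submxK.
have dl_E : dlsubmx eval_mx = 0.
  apply/matrixP => i j; have lt_i := ltn_ord i; have lt_j := ltn_ord j.
  rewrite !mxE /= /slotted_desc /eval_coef /eval_last /= lt_j.
  case: ifP => lt_iN.
    by have -> : (top - (n - k + i) == top - j)%N = false by lia.
  case: ifP => // ne_iN.
  by have -> : (top.+1 - (n - k + i) == top - j)%N = false by lia.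
have ul_E : ulsubmx eval_mx = 1%:M.
  apply/matrixP => i j; have lt_i := ltn_ord i; have lt_j := ltn_ord j.
  rewrite !mxE /= /slotted_desc /eval_coef /= lt_j ifT; last by lia.
  suff -> : (top - i == top - j)%N = (i == j) by [].
  by apply/eqP/eqP => [eq_ij|->]; [apply: ord_inj|]; lia.
by rewrite dl_E det_ublock ul_E det1 mul1r det_drsub_eval.
Qed.

Variable g : {poly K}.
Hypothesis size_g : (size g <= n.+1)%N.

(* Row r of the bordered matrix is the polynomial [bordered_row r] read in the
   basis x^top, ..., x^0, with last entry [bordered_last r]. *)
Definition bordered_row (r : nat) : {poly K} :=
  if (r < n - k)%N then f * 'X^(n - k - 1 - r)
  else if (r < N)%N then g * 'X^(N - 1 - r) else 'X^(N + k - r).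

Definition bordered_last (r : nat) : {poly K} :=
  if (r < n - k)%N then 'X^(n - k - 1 - r) else 0.

Definition bordered_mx : 'M[{poly K}]_L := \matrix_(r < L, c < L)
  slotted_desc N.-1 top (fun d => ((bordered_row r)`_d)%:P) (bordered_last r) c.

Local Notation P := (bordered_mx *m eval_mx).

Lemma size_bordered_row r : (size (bordered_row r) <= L.-1)%N.
Proof.
rewrite /bordered_row; case: ifP => lt_r1; last case: ifP => lt_r2.
- by apply: leq_trans (size_polyMleq _ _) _; rewrite size_f size_polyXn; lia.
- by apply: leq_trans (size_polyMleq _ _) _; rewrite size_polyXn; lia.
- by rewrite size_polyXn; lia.
Qed.

Lemma bordered_eval_entry (r s : 'I_L) :
  P r s = bordered_last r * eval_last s +
          \sum_(d < L.-1) ((bordered_row r)`_d)%:P * eval_coef s d.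
Proof.
rewrite mxE; under eq_bigr do rewrite !mxE.
by rewrite (_ : top = L.-2); [rewrite sum_slotted_desc //; lia | lia].
Qed.

Lemma bordered_eval_coef (r s : 'I_L) : (s < n - k)%N ->
  P r s = ((bordered_row r)`_(top - s)%N)%:P.
Proof.
move=> lt_s; rewrite bordered_eval_entry /eval_last lt_s mulr0 add0r.
have lt_top : (top - s < L.-1)%N by lia.
rewrite (bigD1 (Ordinal lt_top)) //= big1 ?addr0; first by rewrite /eval_coef lt_s eqxx mulr1.
move=> d ne_d; rewrite /eval_coef lt_s.
have -> : (d == (top - s)%N :> nat) = false.
  by apply: (contraNF _ ne_d) => /eqP eq_d; apply/eqP/val_inj.
by rewrite mulr0.
Qed.

Lemma bordered_eval_pt (r s : 'I_L) : (n - k <= s)%N ->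
  P r s = bordered_last r * - (f \Po eval_pt s) + (bordered_row r \Po eval_pt s).
Proof.
move=> le_s; rewrite bordered_eval_entry /eval_last /eval_coef ltnNge le_s /=.
by rewrite (comp_polyE_widen _ (size_bordered_row r)).
Qed.

(* The rows (f, j) vanish at every point because p^j f(p) = x^j f(p). *)
Lemma ursub_bordered_eval : ursubmx P = 0.
Proof.
apply/matrixP => i j; rewrite 2![LHS]mxE bordered_eval_pt /=; last by lia.
rewrite eval_pt_shift /bordered_last /bordered_row /= ltn_ord mxE.
rewrite comp_polyM comp_Xn_poly.
case: (comp_pts_x_root j root_f) => [->|->]; first by rewrite oppr0 mulr0 mul0r add0r.
by rewrite comp_polyXr mulrN mulrC addNr.
Qed.

Lemma drsub_bordered_eval : drsubmx P = Mmat k g alpha.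
Proof.
apply/matrixP => i j; rewrite 2![LHS]mxE bordered_eval_pt /=; last by lia.
rewrite eval_pt_shift /bordered_last /bordered_row mxE /=.
have -> : (n - k + i < n - k)%N = false by lia.
rewrite mul0r add0r.
have -> : (n - k + i < m + n - 2 * k)%N = (i < m - k)%N by lia.
case: ifP => _; last by rewrite comp_Xn_poly; congr (_ ^+ _); lia.
by rewrite comp_polyM comp_Xn_poly; congr (_ * _ ^+ _); lia.
Qed.

Lemma det_ulsub_bordered_eval : \det (ulsubmx P) = 1.
Proof.
rewrite -det_tr det_trig.
  apply: big1 => i _; have lt_i := ltn_ord i.
  rewrite 3![LHS]mxE bordered_eval_coef /bordered_row /= ?ltn_ord ?coefMXn; last by lia.
  rewrite ifF; last by lia.
  by rewrite (_ : (top - i - (n - k - 1 - i) = m)%N) ?coef_f_deg //; lia.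
apply/is_trig_mxP => i j lt_ij; have lt_i := ltn_ord i; have lt_j := ltn_ord j.
rewrite 3![LHS]mxE bordered_eval_coef /bordered_row /= ?ltn_ord ?coefMXn; last by lia.
case: ifP => // _; rewrite nth_default // size_f; lia.
Qed.

Lemma det_bordered_eval : \det P = \det (Mmat k g alpha).
Proof.
rewrite -[P]submxK ursub_bordered_eval det_lblock det_ulsub_bordered_eval.
by rewrite drsub_bordered_eval mul1r.
Qed.

Lemma det_bordered_mx : \det bordered_mx = Fk m n k f g.
Proof.
have eqL : L = (N + k.+1)%N by lia.
rewrite -(det_castmx eqL) -[castmx _ _]submxK; set C := castmx _ _.
have low_row i : bordered_row (N + i) = 'X^(k - i) /\ bordered_last (N + i) = 0.
  by rewrite /bordered_row /bordered_last !ifF; [split; [congr (_ ^+ _); lia|] | lia..].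
have dl_C : dlsubmx C = 0.
  apply/matrixP => i j; have lt_i := ltn_ord i; have lt_j := ltn_ord j.
  rewrite !mxE castmxE mxE /= /slotted_desc; have [-> ->] := low_row i.
  rewrite coefXn; case: ifP => lt_jN.
    by have -> : (top - j == k - i)%N = false by lia.
  by rewrite ifT //; lia.
have dr_C : drsubmx C = 1%:M.
  apply/matrixP => i j; have lt_i := ltn_ord i; have lt_j := ltn_ord j.
  rewrite !mxE castmxE mxE /= /slotted_desc; have [-> _] := low_row i.
  rewrite !ifF ?coefXn; try lia.
  have -> : (top.+1 - (N + j) == k - i)%N = (i == j).
    by apply/eqP/eqP => [eq_ij|->]; [apply: ord_inj|]; lia.
  by case: (i == j); rewrite ?polyC1 ?polyC0.
have ul_C : ulsubmx C = subres_mx m n k f g (fun j => 'X^j) (fun _ => 0).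
  apply/matrixP => i j; have lt_i := ltn_ord i; have lt_j := ltn_ord j.
  rewrite !mxE castmxE mxE /= /slotted_desc /bordered_row /bordered_last /= lt_i.
  case: (ltnP j N.-1) => lt_jN; first by case: ifP.
  by rewrite ifT; [case: ifP | lia].
by rewrite dl_C det_ublock dr_C det1 mulr1 ul_C.
Qed.

Lemma Fk_mul_vdm :
  Fk m n k f g * ((-1) ^+ (m - k) * \det V) = \det (Mmat k g alpha).
Proof.
by rewrite -det_bordered_mx -det_eval_mx -det_mulmx det_bordered_eval.
Qed.

End BorderedSubresultant.

Lemma size_prod_XsubC_ord (R : idomainType) l (c : 'I_l -> R) :
  size (\prod_(i < l) ('X - (c i)%:P)) = l.+1.
Proof. by rewrite size_prod_XsubC [index_enum _]unlock -enumT size_enum_ord. Qed.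

Lemma tofrac_Fk (K : fieldType) m n k (alpha : 'I_m -> K) (g : {poly K}) :
  injective alpha -> (k < m)%N -> (k < n)%N -> (size g <= n.+1)%N ->
  let f := \prod_(i < m) ('X - (alpha i)%:P) in
  (Fk m n k f g)%:F =
    (-1) ^+ (m - k) * (\det (Mmat k g alpha))%:F / (\det (vdm (pts_x alpha)))%:F.
Proof.
move=> inj_a lt_km lt_kn size_g f.
have size_f : size f = m.+1 := size_prod_XsubC_ord alpha.
have root_f i : root f (alpha i).
  by apply/rootP; rewrite horner_prod (bigD1 i) //= hornerXsubC subrr mul0r.
have detV_neq0 : (\det (vdm (pts_x alpha)))%:F != 0.
  by rewrite tofrac_eq0; apply/det_vdm_neq0/pts_x_inj.
rewrite -(Fk_mul_vdm lt_km lt_kn (monic_prod_XsubC _ _ _) size_f root_f size_g).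
by rewrite !rmorphM rmorph_sign mulrCA signrMK mulfK.
Qed.

Lemma Gk_Fk (K : fieldType) m n k (f g : {poly K}) :
  (k < m)%N -> (k < n)%N ->
  Gk m n k f g = (-1) ^+ ((n - k) * (m - k)) * Fk n m k g f.
Proof.
move=> lt_km lt_kn; set p := (m + n - 2 * k).-1.
have e1 : (m + n - 2 * k = p.+1)%N by rewrite /p; lia.
have e2 : (n + m - 2 * k = p.+1)%N by rewrite /p; lia.
rewrite /Gk /Fk -(det_castmx e1) -[X in _ = _ * X](det_castmx e2).
set S := castmx _ (subres_mx m n k f g _ _).
have -> : castmx (e2, e2) (subres_mx n m k g f (fun j => 'X^j) (fun=> 0)) =
    rot_rows (n - k) S.
  apply/matrixP => i j; rewrite castmxE !mxE castmxE mxE /=.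
  have lt_i := ltn_ord i; have lt_j := ltn_ord j.
  rewrite inordK ?ltn_pmod // (_ : (n + m - 2 * k).-1 = (m + n - 2 * k).-1); last by lia.
  rewrite (_ : (n + m - k - 1 - j = m + n - k - 1 - j)%N); last by lia.
  case: (ltnP i (m - k)) => le_i.
    rewrite modn_small; last by lia.
    rewrite (_ : (i + (n - k) < n - k)%N = false); last by lia.
    by rewrite (_ : (m - k - 1 - i = m + n - 2 * k - 1 - (i + (n - k)))%N) //; lia.
  rewrite (_ : (i + (n - k) = (i - (m - k)) + p.+1)%N); last by lia.
  rewrite modnDr modn_small; last by lia.
  rewrite (_ : (i - (m - k) < n - k)%N); last by lia.
  by rewrite (_ : (n + m - 2 * k - 1 - i = n - k - 1 - (i - (m - k)))%N) //; lia.
rewrite det_rot_rows (_ : (n - k) * p = (n - k).-1 * (n - k) + (n - k) * (m - k))%N.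
  by rewrite exprD sign_pred_mul mul1r signrMK.
by rewrite /p; nia.
Qed.

Theorem corollary3p13 (K : fieldType) (m n k : nat)
    (alpha : 'I_m -> K) (beta : 'I_n -> K) :
  injective alpha -> injective beta ->
  (k < m)%N -> (k < n)%N ->
  let f := \prod_(i < m) ('X - (alpha i)%:P) in
  let g := \prod_(j < n) ('X - (beta j)%:P) in
  (Fk m n k f g)%:F =
    (-1) ^+ (m - k) * (\det (Mmat k g alpha))%:F
      / (\det (vdm (pts_x alpha)))%:F
  /\
  (Gk m n k f g)%:F =
    (-1) ^+ ((m - k - 1) * (n - k)) * (\det (Mmat k f beta))%:F
      / (\det (vdm (pts_x beta)))%:F.
Proof.
move=> inj_a inj_b lt_km lt_kn /=.
have size_f := size_prod_XsubC_ord alpha; have size_g := size_prod_XsubC_ord beta.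
split; first exact: tofrac_Fk (eq_leq size_g).
rewrite Gk_Fk // tofracM rmorph_sign (tofrac_Fk inj_b lt_kn lt_km (eq_leq size_f)).
rewrite !mulrA -exprD.
rewrite (_ : (n - k) * (m - k) + (n - k) = (m - k - 1) * (n - k) + (n - k) * 2)%N.
  by rewrite exprD [(-1) ^+ (_ * 2)]exprM sqrr_sign mulr1.
nia.
Qed.
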